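(* Let $f=(f_V,\{f_{l,v}\}_{v\in V})\colon \mathcal{G}\to \mathcal{G}'$ be a moment graph morphism and let $\xi=\{\xi_v\}_{v\in V}$ be a $\mathcal{G}$-monodromy such that if $v - w\in E$ and $f_V(v)\neq f_V(w)$, then $\xi_v(l'(f_E(v - w)))\in l(v - w)\mathbb{Z}$. Then there is a ring homomorphism between structure algebras \[ f^{\xi\ast}\colon \mathcal{Z}(\mathcal{G}') \to \mathcal{Z}(\mathcal{G}), \quad (z_{v'})_{v'\in V'}\mapsto (\xi_v(z_{f_V(v)}))_{v\in V}, \] called the pull-back map induced by $f$ and twisted by $\xi$.
   Context: A moment graph on a lattice $\Lambda$ is $\mathcal{G}=\big((V,\le), l\colon E\to \Lambda\setminus\{0\}\big)$ with $(V,\le)$ a poset, $E\subset V\times V$ a set of directed edges $v\to w$ labelled by $l(v\to w)\neq 0$, and $v\le w$, $v\ne w$ for every edge $v\to w$; $v - w$ denotes the underlying unoriented edge. A morphism $f\colon\mathcal{G}\to\mathcal{G}'=\big((V',\le'),l'\colon E'\to\Lambda\setminus\{0\}\big)$ consists of a poset map $f_V\colon V\to V'$ such that for each edge $v - w\in E$ either $f_V(v)=f_V(w)$ or $f_V(v) - f_V(w)\in E'$ (in the latter case set $f_E(v - w):=f_V(v) - f_V(w)$), and $\mathbb{Z}$-linear automorphisms $f_{l,v}$ of $\Lambda$ such that for each edge $v - w$ with $f_V(v)\ne f_V(w)$: $f_{l,v}(l(v - w))=\pm l'(f_E(v - w))$ and $f_{l,v}\equiv f_{l,w}$ modulo $l'(f_E(v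 - w))\mathbb{Z}$. A $\mathcal{G}$-monodromy is a collection $\{\xi_v\}_{v\in V}$ of automorphisms of $\Lambda$ with $\xi_v(\lambda)-\xi_w(\lambda)\in l(v\to w)\mathbb{Z}$ for all $v\to w\in E$, $\lambda\in\Lambda$; automorphisms of $\Lambda$ are extended to the ring $S$. For $S=\mathbb{Z}[\Lambda]$ (with $x_\lambda=1-e^{-\lambda}$) or $S=S^*(\Lambda)$ (with $x_\lambda=\lambda$), the structure algebra is $\mathcal{Z}(\mathcal{G})=\{(z_v)_v\in\prod_{v\in V}S\mid z_v-z_w\in x_{l(v\to w)}S\ \forall v\to w\in E\}$ with coordinatewise multiplication. *)

From HB Require Import structures.
From mathcomp Require Import all_boot all_order all_algebra.
From mathcomp Require Import fraction.
From mathcomp.multinomials Require Import mpoly.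
From Stdlib Require Import ClassicalEpsilon.

Set Implicit Arguments.
Unset Strict Implicit.
Unset Printing Implicit Defensive.

Import Order.TTheory GRing.Theory Num.Theory.
Local Open Scope ring_scope.

(* The lattice Lambda is Z^n, realised as integer row vectors 'rV[int]_n.
   A Z-linear automorphism of Lambda is an invertible integer matrix
   (A \in unitmx, i.e. det A = +-1) acting by  lam |-> lam *m A. *)
Notation lattice n := 'rV[int]_n.
Definition lat_aut n (A : 'M[int]_n) : Prop := A \in unitmx.

Definition in_multZ n (lam mu : lattice n) : Prop :=
  exists k : int, lam = k *: mu.

Record mgraph (n : nat) (V : finType) := MGraph {
  mle : rel V;
  mle_refl : reflexive mle;
  mle_anti : antisymmetric mle;
  mle_trans : transitive mle;
  medge : rel V;
  mlab : V -> V -> lattice n;          (* label l(v -> w), meaningful on edges *)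
  mlab_nz : forall v w, medge v w -> mlab v w != 0;
  medge_le : forall v w, medge v w -> mle v w /\ v <> w
}.

Definition uedge n V (G : mgraph n V) (v w : V) : bool :=
  medge G v w || medge G w v.
Definition ulab n V (G : mgraph n V) (v w : V) : lattice n :=
  if medge G v w then mlab G v w else mlab G w v.

Definition is_mg_morphism n (V V' : finType) (G : mgraph n V) (G' : mgraph n V')
    (fV : V -> V') (fl : V -> 'M[int]_n) : Prop :=
  [/\ (forall v w, mle G v w -> mle G' (fV v) (fV w)),
      (forall v, lat_aut (fl v)),
      (forall v w, uedge G v w -> fV v = fV w \/ uedge G' (fV v) (fV w)) &
      (forall v w, uedge G v w -> fV v <> fV w ->
         (ulab G v w *m fl v = ulab G' (fV v) (fV w)
          \/ ulab G v w *m fl v = - ulab G' (fV v) (fV w)) /\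
         (forall lam : lattice n,
            in_multZ (lam *m fl v - lam *m fl w) (ulab G' (fV v) (fV w))))].

Definition is_monodromy n V (G : mgraph n V) (xi : V -> 'M[int]_n) : Prop :=
  (forall v, lat_aut (xi v)) /\
  (forall v w, medge G v w ->
     forall lam : lattice n, in_multZ (lam *m xi v - lam *m xi w) (mlab G v w)).

(* ---------- Structure algebras (generic coefficient ring) ----------
   S is a commutative ring, inS carves out the ring actually used (for the
   group ring it is a subring of a bigger field), xS lam = x_lam, and
   actS A is the extension of the automorphism A of Lambda to S. *)
Definition struct_alg n V (S : comRingType) (inS : S -> Prop)
    (xS : lattice n -> S) (G : mgraph n V) (z : {ffun V -> S}) : Prop :=
  (forall v, inS (z v)) /\
  (forall v w, medge G v w ->
     exists s, inS s /\ z v - z w = xS (mlab G v w) * s).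

Definition pullback n (V V' : finType) (S : comRingType)
    (actS : 'M[int]_n -> S -> S) (fV : V -> V') (xi : V -> 'M[int]_n)
    (z : {ffun V' -> S}) : {ffun V -> S} :=
  [ffun v => actS (xi v) (z (fV v))].

Definition pullback_ring_hom n (V V' : finType) (S : comRingType)
    (inS : S -> Prop) (xS : lattice n -> S) (actS : 'M[int]_n -> S -> S)
    (G : mgraph n V) (G' : mgraph n V') (fV : V -> V') (xi : V -> 'M[int]_n)
    : Prop :=
  let Z := struct_alg inS xS G in
  let Z' := struct_alg inS xS G' in
  let pb := pullback actS fV xi in
  [/\ (forall z, Z' z -> Z (pb z)),
      pb 1 = 1,
      (forall z1 z2, Z' z1 -> Z' z2 -> pb (z1 + z2) = pb z1 + pb z2) &
      (forall z1 z2, Z' z1 -> Z' z2 -> pb (z1 * z2) = pb z1 * pb z2)].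

(* ---------- S = S^*(Lambda): polynomial ring Z[X_0..X_{n-1}] ---------- *)
Definition SymS n := {mpoly int[n]}.
Definition sym_x n (lam : lattice n) : {mpoly int[n]} :=
  \sum_(i < n) (lam 0 i)%:MP * 'X_i.
(* A acts by X_i = x_{e_i} |-> x_{e_i A}, extended as a ring endomorphism *)
Definition sym_act n (A : 'M[int]_n) (p : {mpoly int[n]}) : {mpoly int[n]} :=
  comp_mpoly [tuple sym_x (delta_mx 0 i *m A) | i < n] p.

(* ---------- S = Z[Lambda]: Laurent polynomials ----------
   Z[Lambda] is realised as the subring of the fraction field of
   Z[X_0..X_{n-1}] spanned by the Laurent monomials e^lam = prod X_i^(lam_i). *)
Definition FracS n := {fraction {mpoly int[n]}}.
Definition emon n (lam : lattice n) : FracS n :=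
  \prod_(i < n) (tofrac ('X_i : {mpoly int[n]})) ^ (lam 0 i).
Definition laur_eval n (c : seq (int * lattice n)) : FracS n :=
  \sum_(p <- c) (p.1)%:~R * emon p.2.
Definition inZL n (s : FracS n) : Prop := exists c, s = laur_eval c.
Definition laur_x n (lam : lattice n) : FracS n := 1 - emon (- lam).
(* A acts by e^lam |-> e^(lam A); defined via a chosen representation
   (independent of the choice on elements of Z[Lambda]). *)
Definition laur_act n (A : 'M[int]_n) (s : FracS n) : FracS n :=
  laur_eval [seq (p.1, p.2 *m A) | p <- epsilon (inhabits [::])
                                              (fun c => s = laur_eval c)].

(* The pull-back is coordinatewise a ring homomorphism, so the point is that it
   preserves the divisibility conditions defining the structure algebras. For an
   edge v -> w of G, split
     xi_v(z_{f v}) - xi_w(z_{f w}) = xi_v(z_{f v} - z_{f w}) + (xi_v - xi_w)(z_{f w}).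
   The second term is divisible by x_{l(v -> w)}: xi is a monodromy, and two
   automorphisms of Lambda that agree modulo l act on S congruently modulo x_l.
   The first term vanishes if f contracts the edge; otherwise it equals
   xi_v(x_{l'}) xi_v(s) = x_{l' xi_v} xi_v(s), and l' xi_v is an integer multiple
   of l by hypothesis, while x_{k l} is a multiple of x_l both in S^*(Lambda) and
   in Z[Lambda]. On Z[Lambda] the action is defined through an arbitrarily chosen
   representation of each element; the choice is irrelevant because the Laurent
   monomials are linearly independent. *)

From HB Require Import structures.
From mathcomp Require Import all_boot all_order all_algebra.
From mathcomp Require Import fraction.
From mathcomp.multinomials Require Import mpoly.
From Stdlib Require Import ClassicalEpsilon.

Set Implicit Arguments.
Unset Strict Implicit.
Unset Printing Implicit Defensive.

Import Order.TTheory GRing.Theory Num.Theory.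
Local Open Scope ring_scope.

Definition subring_pred (S : comNzRingType) (inS : S -> Prop) : Prop :=
  [/\ inS 1, forall a b, inS a -> inS b -> inS (a - b)
           & forall a b, inS a -> inS b -> inS (a * b)].

Lemma subring_predT (S : comNzRingType) : subring_pred (fun _ : S => True).
Proof. by []. Qed.

Section DivisibilityInSubring.

Variables (S : comNzRingType) (inS : S -> Prop).
Hypothesis inS_subring : subring_pred inS.

Let inS1 : inS 1. Proof. by case: inS_subring. Qed.
Let inSB a b : inS a -> inS b -> inS (a - b). Proof. by case: inS_subring => _ + _; apply. Qed.
Let inSM a b : inS a -> inS b -> inS (a * b). Proof. by case: inS_subring => _ _; apply. Qed.

Lemma inS0 : inS 0.
Proof. by rewrite -(subrr 1); apply: inSB. Qed.

Lemma inSN a : inS a -> inS (- a).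
Proof. by move=> Sa; rewrite -sub0r; apply: inSB => //; apply: inS0. Qed.

Lemma inSD a b : inS a -> inS b -> inS (a + b).
Proof. by move=> Sa Sb; rewrite -[b]opprK; apply: inSB => //; apply: inSN. Qed.

Definition dvd_in (d a : S) : Prop := exists s, inS s /\ a = d * s.

Definition eqmod_in (d a b : S) : Prop := dvd_in d (a - b).

Lemma dvd_in0 d : dvd_in d 0.
Proof. by exists 0; rewrite mulr0; split; first exact: inS0. Qed.

Lemma dvd_in_refl d : dvd_in d d.
Proof. by exists 1; rewrite mulr1. Qed.

Lemma dvd_inN d a : dvd_in d a -> dvd_in d (- a).
Proof. by move=> [s [Ss ->]]; exists (- s); rewrite mulrN; split; first exact: inSN. Qed.

Lemma dvd_inD d a b : dvd_in d a -> dvd_in d b -> dvd_in d (a + b).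
Proof.
by move=> [s [Ss ->]] [t [St ->]]; exists (s + t); rewrite mulrDr; split; first exact: inSD.
Qed.

Lemma dvd_in_mulr d a c : inS c -> dvd_in d a -> dvd_in d (a * c).
Proof. by move=> Sc [s [Ss ->]]; exists (s * c); rewrite mulrA; split; first exact: inSM. Qed.

Lemma eqmod_in_refl d a : eqmod_in d a a.
Proof. by rewrite /eqmod_in subrr; apply: dvd_in0. Qed.

Lemma eqmod_in_trans d a b c : eqmod_in d a b -> eqmod_in d b c -> eqmod_in d a c.
Proof. by move=> ab bc; rewrite /eqmod_in -[a](subrK b) -addrA; apply: dvd_inD. Qed.

Lemma eqmod_inD d a1 a2 b1 b2 :
  eqmod_in d a1 a2 -> eqmod_in d b1 b2 -> eqmod_in d (a1 + b1) (a2 + b2).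
Proof. by move=> a12 b12; rewrite /eqmod_in opprD addrACA; apply: dvd_inD. Qed.

Lemma eqmod_inM d a1 a2 b1 b2 : inS a1 -> inS b2 ->
  eqmod_in d a1 a2 -> eqmod_in d b1 b2 -> eqmod_in d (a1 * b1) (a2 * b2).
Proof.
move=> Sa1 Sb2 a12 b12; rewrite /eqmod_in.
have -> : a1 * b1 - a2 * b2 = (b1 - b2) * a1 + (a1 - a2) * b2.
  by rewrite mulrBl mulrBl [b1 * a1]mulrC [b2 * a1]mulrC addrA subrK.
by apply: dvd_inD; apply: dvd_in_mulr.
Qed.

Lemma eqmod_in_sum (I : Type) (r : seq I) (F1 F2 : I -> S) d :
  (forall i, eqmod_in d (F1 i) (F2 i)) ->
  eqmod_in d (\sum_(i <- r) F1 i) (\sum_(i <- r) F2 i).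
Proof.
move=> F12; elim/big_ind2: _ => //; first exact: eqmod_in_refl.
by move=> *; apply: eqmod_inD.
Qed.

Lemma inS_prod (I : Type) (r : seq I) (F : I -> S) :
  (forall i, inS (F i)) -> inS (\prod_(i <- r) F i).
Proof. by move=> SF; elim/big_ind: _ => //; apply: inSM. Qed.

Lemma eqmod_in_prod (I : Type) (r : seq I) (F1 F2 : I -> S) d :
  (forall i, inS (F1 i)) -> (forall i, inS (F2 i)) ->
  (forall i, eqmod_in d (F1 i) (F2 i)) ->
  eqmod_in d (\prod_(i <- r) F1 i) (\prod_(i <- r) F2 i).
Proof.
move=> SF1 SF2 F12; elim: r => [|i r IHr]; first by rewrite !big_nil; apply: eqmod_in_refl.
by rewrite !big_cons; apply: eqmod_inM => //; apply: inS_prod.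
Qed.

Lemma eqmod_inX d a b m : inS a -> inS b ->
  eqmod_in d a b -> eqmod_in d (a ^+ m) (b ^+ m).
Proof.
move=> Sa Sb ab; rewrite -[m]card_ord -!prodr_const.
by apply: eqmod_in_prod.
Qed.

End DivisibilityInSubring.

Section PullbackRingHom.

Variables (n : nat) (S : comNzRingType) (inS : S -> Prop).
Variables (xS : lattice n -> S) (actS : 'M[int]_n -> S -> S).
Hypotheses (inS_subring : subring_pred inS) (inS_x : forall lam, inS (xS lam)).
Hypotheses (inS_act : forall A s, inS s -> inS (actS A s))
  (act1 : forall A, actS A 1 = 1)
  (actD : forall A a b, inS a -> inS b -> actS A (a + b) = actS A a + actS A b)
  (actM : forall A a b, inS a -> inS b -> actS A (a * b) = actS A a * actS A b)
  (act_x : forall A lam, actS A (xS lam) = xS (lam *m A))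
  (dvd_x_scale : forall lam (k : int), dvd_in inS (xS lam) (xS (k *: lam)))
  (eqmod_act : forall lam A B,
     (forall mu, in_multZ (mu *m A - mu *m B) lam) ->
     forall s, inS s -> eqmod_in inS (xS lam) (actS A s) (actS B s)).

Lemma actB A a b : inS a -> inS b -> actS A (a - b) = actS A a - actS A b.
Proof.
move=> Sa Sb; apply/eqP; rewrite eq_sym subr_eq -actD ?subrK //.
by case: inS_subring => _ + _; apply.
Qed.

Variables (V V' : finType) (G : mgraph n V) (G' : mgraph n V').
Variables (fV : V -> V') (xi : V -> 'M[int]_n).

Lemma struct_alg_uedge z a b : struct_alg inS xS G' z -> uedge G' a b ->
  eqmod_in inS (xS (ulab G' a b)) (z a) (z b).
Proof.
move=> [_ z_eqmod]; rewrite /ulab /uedge /eqmod_in.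
case: ifP => [ab _ | _ /= ba]; first exact: z_eqmod.
by rewrite -opprB; apply: (dvd_inN inS_subring); apply: z_eqmod.
Qed.

Hypotheses (fV_edge : forall v w, uedge G v w -> fV v = fV w \/ uedge G' (fV v) (fV w))
  (xi_mon : is_monodromy G xi)
  (xi_twist : forall v w, uedge G v w -> fV v <> fV w ->
     in_multZ (ulab G' (fV v) (fV w) *m xi v) (ulab G v w)).

Lemma pullback_struct_alg z :
  struct_alg inS xS G' z -> struct_alg inS xS G (pullback actS fV xi z).
Proof.
move=> zG'; have [z_in _] := zG'; have [_ xi_eqmod] := xi_mon.
split=> [v | v w vw]; rewrite !ffunE; first exact: inS_act.
have uvw : uedge G v w by rewrite /uedge vw.
have l_vw : ulab G v w = mlab G v w by rewrite /ulab vw.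
apply: (eqmod_in_trans inS_subring (b := actS (xi v) (z (fV w)))); last first.
  exact: (eqmod_act (xi_eqmod v w vw) (z_in (fV w))).
have [-> | fvw] := eqVneq (fV v) (fV w); first exact: eqmod_in_refl.
have [/eqP | uf] := fV_edge uvw; first by rewrite (negbTE fvw).
have [s [Ss s_def]] := struct_alg_uedge zG' uf.
have [k l'_def] := xi_twist uvw (elimN eqP fvw).
rewrite /eqmod_in -actB ?z_in // s_def actM // act_x l'_def l_vw.
by apply: (dvd_in_mulr inS_subring (inS_act _ Ss)); apply: dvd_x_scale.
Qed.

Lemma pullback_is_ring_hom : pullback_ring_hom inS xS actS G G' fV xi.
Proof.
split=> [z | | z1 z2 [S1 _] [S2 _] | z1 z2 [S1 _] [S2 _]].
- exact: pullback_struct_alg.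
- by apply/ffunP => v; rewrite !ffunE act1.
- by apply/ffunP => v; rewrite !ffunE actD.
- by apply/ffunP => v; rewrite !ffunE actM.
Qed.

End PullbackRingHom.

Section SymmetricAlgebra.

Variable n : nat.

Lemma sym_xD (a b : lattice n) : sym_x (a + b) = sym_x a + sym_x b.
Proof.
rewrite /sym_x -big_split; apply: eq_bigr => i _.
by rewrite mxE raddfD mulrDl.
Qed.

Lemma sym_xZ (a : lattice n) (k : int) : sym_x (k *: a) = k%:MP * sym_x a.
Proof.
rewrite /sym_x mulr_sumr; apply: eq_bigr => i _.
by rewrite mxE mpolyCM mulrA.
Qed.

Lemma sym_xB (a b : lattice n) : sym_x (a - b) = sym_x a - sym_x b.
Proof. by rewrite sym_xD -scaleN1r sym_xZ mpolyCN mpolyC1 mulN1r. Qed.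

Lemma sym_act_x (A : 'M[int]_n) (lam : lattice n) :
  sym_act A (sym_x lam) = sym_x (lam *m A).
Proof.
rewrite /sym_act /sym_x raddf_sum /=.
under eq_bigr => i _ do
  rewrite rmorphM /= comp_mpolyC comp_mpolyXU -tnth_nth tnth_mktuple.
under [RHS]eq_bigr => j _ do rewrite mxE raddf_sum /= mulr_suml.
rewrite exchange_big /=; apply: eq_bigr => i _.
rewrite mulr_sumr; apply: eq_bigr => j _.
by rewrite -rowE mxE mpolyCM mulrA.
Qed.

Lemma sym_act_eqmod (lam : lattice n) (A B : 'M[int]_n) :
  (forall mu, in_multZ (mu *m A - mu *m B) lam) ->
  forall p, eqmod_in (fun _ : {mpoly int[n]} => True) (sym_x lam) (sym_act A p) (sym_act B p).
Proof.
move=> AB p; rewrite /sym_act !comp_mpolyEX.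
have trivS := subring_predT {mpoly int[n]}.
apply: (eqmod_in_sum trivS) => m; rewrite !comp_mpolyX -!mul_mpolyC.
apply: (eqmod_inM trivS) => //; first exact: eqmod_in_refl.
apply: (eqmod_in_prod trivS) => // i; apply: (eqmod_inX trivS) => //.
have [k k_def] := AB (delta_mx 0 i).
by rewrite !tnth_mktuple; exists k%:MP; rewrite /eqmod_in -sym_xB k_def sym_xZ mulrC.
Qed.

Lemma sym_pullback_is_ring_hom (V V' : finType) (G : mgraph n V) (G' : mgraph n V')
    (fV : V -> V') (xi : V -> 'M[int]_n) :
  (forall v w, uedge G v w -> fV v = fV w \/ uedge G' (fV v) (fV w)) ->
  is_monodromy G xi ->
  (forall v w, uedge G v w -> fV v <> fV w ->
     in_multZ (ulab G' (fV v) (fV w) *m xi v) (ulab G v w)) ->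
  pullback_ring_hom (fun _ : {mpoly int[n]} => True) (@sym_x n) (@sym_act n) G G' fV xi.
Proof.
move=> fV_edge xi_mon xi_twist.
apply: pullback_is_ring_hom fV_edge xi_mon xi_twist => //.
- by move=> A; rewrite /sym_act comp_mpoly1.
- by move=> A a b _ _; rewrite /sym_act raddfD.
- by move=> A a b _ _; rewrite /sym_act rmorphM.
- exact: sym_act_x.
- by move=> lam k; exists k%:MP; rewrite sym_xZ mulrC.
- by move=> lam A B AB s _; apply: sym_act_eqmod.
Qed.

End SymmetricAlgebra.

Section LaurentPolynomials.

Variable n : nat.

Local Notation terms := (seq (int * lattice n)).

Lemma tofracX_unit (i : 'I_n) : tofrac ('X_i : {mpoly int[n]}) \is a GRing.unit.
Proof.
rewrite unitfE tofrac_eq0; apply/eqP => /(congr1 (mcoeff U_(i)%MM)).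
by rewrite mcoeffX mcoeff0 eqxx.
Qed.

Lemma emon0 : emon (0 : lattice n) = 1.
Proof. by rewrite /emon big1 // => i _; rewrite mxE expr0z. Qed.

Lemma emonD (a b : lattice n) : emon (a + b) = emon a * emon b.
Proof.
rewrite /emon -big_split; apply: eq_bigr => i _.
by rewrite mxE exprzDr // tofracX_unit.
Qed.

Lemma emonNK (a : lattice n) : emon (- a) * emon a = 1.
Proof. by rewrite -emonD addNr emon0. Qed.

Definition opp_terms (c : terms) : terms := [seq (- p.1, p.2) | p <- c].

Definition mul_terms (c1 c2 : terms) : terms :=
  [seq (p.1 * q.1, p.2 + q.2) | p <- c1, q <- c2].

Definition map_exps (g : lattice n -> lattice n) (c : terms) : terms :=
  [seq (p.1, g p.2) | p <- c].

Lemma laur_eval_seq1 k (lam : lattice n) : laur_eval [:: (k, lam)] = k%:~R * emon lam.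
Proof. by rewrite /laur_eval big_seq1. Qed.

Lemma laur_eval1 : laur_eval [:: (1, 0 : lattice n)] = 1.
Proof. by rewrite laur_eval_seq1 emon0 mulr1. Qed.

Lemma laur_eval_cat (c1 c2 : terms) :
  laur_eval (c1 ++ c2) = laur_eval c1 + laur_eval c2.
Proof. by rewrite /laur_eval big_cat. Qed.

Lemma laur_eval_opp (c : terms) : laur_eval (opp_terms c) = - laur_eval c.
Proof.
rewrite /laur_eval big_map -sumrN; apply: eq_bigr => p _.
by rewrite mulrNz mulNr.
Qed.

Lemma laur_eval_mul (c1 c2 : terms) :
  laur_eval (mul_terms c1 c2) = laur_eval c1 * laur_eval c2.
Proof.
elim: c1 => [|p c1 IHc1]; first by rewrite /laur_eval big_nil mul0r.
rewrite /mul_terms /= laur_eval_cat -/(mul_terms c1 c2) IHc1.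
rewrite [laur_eval (_ :: _)]/laur_eval big_cons -/(laur_eval c1) mulrDl.
congr (_ + _).
rewrite /laur_eval big_map mulr_sumr; apply: eq_bigr => q _ /=.
by rewrite emonD intrM mulrACA.
Qed.

Lemma map_exps_mul (g : lattice n -> lattice n) (c1 c2 : terms) :
  {morph g : a b / a + b} ->
  map_exps g (mul_terms c1 c2) = mul_terms (map_exps g c1) (map_exps g c2).
Proof.
move=> gD; rewrite /map_exps /mul_terms.
elim: c1 => [|p c1 IHc1] //=; rewrite map_cat IHc1 -!map_comp.
by congr (_ ++ _); apply: eq_map => q /=; rewrite gD.
Qed.

Definition laur_coef (c : terms) (lam : lattice n) : int :=
  \sum_(p <- c | p.2 == lam) p.1.

Lemma sum_terms_by_exp (R : pzRingType) (F : lattice n -> R) (c : terms) :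
  \sum_(p <- c) p.1%:~R * F p.2 =
  \sum_(lam <- undup (unzip2 c)) (laur_coef c lam)%:~R * F lam.
Proof.
transitivity (\sum_(p <- c) \sum_(lam <- undup (unzip2 c) | lam == p.2) p.1%:~R * F lam).
  rewrite big_seq [RHS]big_seq; apply: eq_bigr => p cp.
  rewrite -big_filter filter_pred1_uniq ?undup_uniq ?mem_undup ?big_seq1 //.
  exact: map_f.
rewrite (exchange_big_dep xpredT) //=; apply: eq_bigr => lam _.
rewrite -mulr_suml /laur_coef rmorph_sum; congr (_ * _).
by apply: eq_bigl => p; rewrite eq_sym.
Qed.

Definition shifted_exp (N : nat) (lam : lattice n) : 'X_{1.. n} :=
  [multinom `|(lam 0 i + N%:Z)%R|%N | i < n].

Lemma emon_shift (N : nat) (lam : lattice n) : (forall i, 0 <= lam 0 i + N%:Z) ->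
  emon (lam + const_mx N%:Z) = tofrac ('X_[shifted_exp N lam] : {mpoly int[n]}).
Proof.
move=> lam_ge; rewrite mpolyXE_id rmorph_prod /emon; apply: eq_bigr => i _.
by rewrite rmorphXn /= mnmE !mxE exprnP gez0_abs.
Qed.

Lemma shifted_exp_inj (N : nat) (lam mu : lattice n) :
  (forall i, 0 <= lam 0 i + N%:Z) -> (forall i, 0 <= mu 0 i + N%:Z) ->
  (shifted_exp N lam == shifted_exp N mu) = (lam == mu).
Proof.
move=> lam_ge mu_ge; apply/eqP/eqP => [/mnmP lam_mu | -> //].
apply/rowP => i; have := lam_mu i; rewrite !mnmE => /(congr1 Posz).
by rewrite !gez0_abs // => /addIr.
Qed.

(* Shifting every exponent by the same N turns the relation into an identity
   between honest polynomials, whose coefficients can then be compared. *)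
Lemma laur_coef_eq0 (c : terms) : laur_eval c = 0 -> forall lam, laur_coef c lam = 0.
Proof.
move=> c0 lam; pose N := (\sum_(mu <- lam :: unzip2 c) \sum_(i < n) `|mu 0%R i|)%N.
have N_ge mu i : mu \in lam :: unzip2 c -> 0 <= mu 0 i + N%:Z.
  move=> mu_in; rewrite -[mu 0 i]opprK addrC subr_ge0.
  apply: ler_normlW; rewrite normrN -abszE lez_nat /N (big_rem mu mu_in) /=.
  by rewrite (bigD1 i) //= -addnA leq_addr.
have c_ge p i : p \in c -> 0 <= p.2 0 i + N%:Z.
  by move=> pc; apply: N_ge; rewrite inE map_f ?orbT.
pose P : {mpoly int[n]} := \sum_(p <- c) p.1%:MP * 'X_[shifted_exp N p.2].
have P0 : P = 0.
  suff : tofrac P = laur_eval c * emon (const_mx N%:Z).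
    by rewrite c0 mul0r => /eqP; rewrite tofrac_eq0 => /eqP.
  rewrite /laur_eval mulr_suml rmorph_sum big_seq [RHS]big_seq /=.
  apply: eq_bigr => p pc; rewrite -mulrA -emonD emon_shift => [|i]; last exact: c_ge.
  by rewrite rmorphM /= -[p.1 in LHS]intz !rmorph_int.
have := congr1 (mcoeff (shifted_exp N lam)) P0.
rewrite mcoeff0 raddf_sum /= => <-; rewrite /laur_coef big_mkcond /=.
rewrite big_seq [RHS]big_seq; apply: eq_bigr => p pc.
rewrite mcoeffCM mcoeffX shifted_exp_inj => [|i|i]; last exact: N_ge (mem_head _ _).
- by case: (p.2 == lam); rewrite ?mulr1 ?mulr0.
- exact: c_ge.
Qed.

Lemma laur_eval_map_exps (g : lattice n -> lattice n) (c c' : terms) :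
  laur_eval c = laur_eval c' -> laur_eval (map_exps g c) = laur_eval (map_exps g c').
Proof.
move=> cc'; apply/eqP; rewrite -subr_eq0 -laur_eval_opp -laur_eval_cat; apply/eqP.
have -> : map_exps g c ++ opp_terms (map_exps g c') = map_exps g (c ++ opp_terms c').
  by rewrite /map_exps /opp_terms map_cat -!map_comp.
have /laur_coef_eq0 coef0 : laur_eval (c ++ opp_terms c') = 0.
  by rewrite laur_eval_cat laur_eval_opp cc' subrr.
rewrite /laur_eval /map_exps big_map /= (sum_terms_by_exp (@emon n \o g)).
by rewrite big1_seq // => lam _; rewrite coef0 mul0r.
Qed.

Lemma laur_act_eval (A : 'M[int]_n) (c : terms) :
  laur_act A (laur_eval c) = laur_eval (map_exps (mulmx^~ A) c).
Proof.
apply: laur_eval_map_exps; apply: esym.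
exact: (epsilon_spec _ (fun c' => laur_eval c = laur_eval c') (ex_intro _ c erefl)).
Qed.

Lemma inZL_subring : subring_pred (@inZL n).
Proof.
split; first by exists [:: (1, 0)]; rewrite laur_eval1.
  move=> _ _ [c ->] [c' ->]; exists (c ++ opp_terms c').
  by rewrite laur_eval_cat laur_eval_opp.
by move=> _ _ [c ->] [c' ->]; exists (mul_terms c c'); rewrite laur_eval_mul.
Qed.

Lemma inZL_emon (lam : lattice n) : inZL (emon lam).
Proof. by exists [:: (1, lam)]; rewrite laur_eval_seq1 mul1r. Qed.

Lemma laur_x_def (lam : lattice n) : laur_x lam = laur_eval [:: (1, 0); (-1, - lam)].
Proof. by rewrite /laur_eval !big_cons big_nil emon0 mulN1r mul1r addr0. Qed.

Lemma inZL_x (lam : lattice n) : inZL (laur_x lam).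
Proof. by rewrite laur_x_def; eexists. Qed.

Lemma laur_xD (a b : lattice n) : laur_x (a + b) = laur_x a + laur_x b * emon (- a).
Proof.
by rewrite /laur_x opprD emonD mulrBl mul1r [emon (- b) * _]mulrC addrA subrK.
Qed.

Lemma laur_xN (a : lattice n) : laur_x (- a) = - emon a * laur_x a.
Proof. by rewrite /laur_x opprK mulrBr mulr1 mulNr [emon a * _]mulrC emonNK opprK addrC. Qed.

Lemma dvd_laur_x_scale (lam : lattice n) (k : int) :
  dvd_in (@inZL n) (laur_x lam) (laur_x (k *: lam)).
Proof.
have dvd_nat m : dvd_in (@inZL n) (laur_x lam) (laur_x (m%:Z *: lam)).
  elim: m => [|m IHm].
    by rewrite scale0r /laur_x oppr0 emon0 subrr; apply: (dvd_in0 inZL_subring).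
  rewrite intS scalerDl scale1r laur_xD.
  apply: (dvd_inD inZL_subring); first exact: (dvd_in_refl inZL_subring).
  by apply: (dvd_in_mulr inZL_subring) => //; apply: inZL_emon.
case: k => m; first exact: dvd_nat.
rewrite NegzE scaleNr laur_xN mulrC.
by apply: (dvd_in_mulr inZL_subring) => //; apply: (@inSN _ _ inZL_subring); apply: inZL_emon.
Qed.

Lemma emon_eqmod (lam a b : lattice n) :
  in_multZ (a - b) lam -> eqmod_in (@inZL n) (laur_x lam) (emon a) (emon b).
Proof.
move=> [k ab]; rewrite /eqmod_in.
have -> : emon a - emon b = laur_x (a - b) * emon a.
  by rewrite /laur_x mulrBl mul1r -emonD opprB subrK.
rewrite ab; apply: (dvd_in_mulr inZL_subring); first exact: inZL_emon.
exact: dvd_laur_x_scale.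
Qed.

Lemma laur_act_eqmod (lam : lattice n) (A B : 'M[int]_n) :
  (forall mu, in_multZ (mu *m A - mu *m B) lam) ->
  forall s, inZL s -> eqmod_in (@inZL n) (laur_x lam) (laur_act A s) (laur_act B s).
Proof.
move=> AB _ [c ->]; rewrite !laur_act_eval /laur_eval !big_map.
apply: (eqmod_in_sum inZL_subring) => p /=.
apply: (eqmod_inM inZL_subring); last exact: emon_eqmod.
- by exists [:: (p.1, 0)]; rewrite laur_eval_seq1 emon0 mulr1.
- exact: inZL_emon.
- exact: (eqmod_in_refl inZL_subring).
Qed.

Lemma laur_pullback_is_ring_hom (V V' : finType) (G : mgraph n V) (G' : mgraph n V')
    (fV : V -> V') (xi : V -> 'M[int]_n) :
  (forall v w, uedge G v w -> fV v = fV w \/ uedge G' (fV v) (fV w)) ->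
  is_monodromy G xi ->
  (forall v w, uedge G v w -> fV v <> fV w ->
     in_multZ (ulab G' (fV v) (fV w) *m xi v) (ulab G v w)) ->
  pullback_ring_hom (@inZL n) (@laur_x n) (@laur_act n) G G' fV xi.
Proof.
move=> fV_edge xi_mon xi_twist.
apply: pullback_is_ring_hom fV_edge xi_mon xi_twist.
- exact: inZL_subring.
- exact: inZL_x.
- by move=> A s _; eexists.
- by move=> A; rewrite -laur_eval1 laur_act_eval /map_exps /= mul0mx.
- move=> A _ _ [c ->] [c' ->].
  by rewrite -laur_eval_cat !laur_act_eval /map_exps map_cat laur_eval_cat.
- move=> A _ _ [c ->] [c' ->].
  by rewrite -laur_eval_mul !laur_act_eval map_exps_mul ?laur_eval_mul // => a b; rewrite mulmxDl.
- by move=> A lam; rewrite !laur_x_def laur_act_eval /map_exps /= mul0mx mulNmx.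
- exact: dvd_laur_x_scale.
- exact: laur_act_eqmod.
Qed.

End LaurentPolynomials.

Theorem mainTheorem2 (n : nat) (V V' : finType)
  (G : mgraph n V) (G' : mgraph n V')
  (fV : V -> V') (fl : V -> 'M[int]_n) (xi : V -> 'M[int]_n) :
  is_mg_morphism G G' fV fl ->
  is_monodromy G xi ->
  (forall v w, uedge G v w -> fV v <> fV w ->
     in_multZ (ulab G' (fV v) (fV w) *m xi v) (ulab G v w)) ->
  pullback_ring_hom (fun _ : SymS n => True) (@sym_x n) (@sym_act n) G G' fV xi
  /\ pullback_ring_hom (@inZL n) (@laur_x n) (@laur_act n) G G' fV xi.
Proof.
move=> [_ _ fV_edge _] xi_mon xi_twist; split.
- exact: sym_pullback_is_ring_hom.
- exact: laur_pullback_is_ring_hom.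
Qed.
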